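(* Let $(\pi_\rho,V_\rho)$ be an irreducible unitary representation of $Spin(n)$ and $V_\rho\otimes\mathbf{R}^n=\bigoplus_{k=0}^N V_{\lambda_k}$ its orthogonal decomposition into irreducible submodules. For all $u,v\in\mathbf{R}^n$, $$\sum_{k=0}^N m(\lambda_k)\,\big(p^\rho_{\lambda_k}(u)\big)^\ast p^\rho_{\lambda_k}(v)=-\frac14\,\pi_\rho([u,v]).$$
   Context: $Cl_n$ is the real Clifford algebra of $\mathbf{R}^n$ with $xy+yx=-2\langle x,y\rangle$; $\mathfrak{spin}(n)=\mathrm{span}\{[e_k,e_l]\}\subset Cl_n$ ($[a,b]=ab-ba$), $Spin(n)=\exp\mathfrak{spin}(n)$, $\pi_{\mathrm{Ad}}(g)x=gxg^{-1}$. $\pi_\rho$ also denotes the infinitesimal representation. $V_\rho\otimes\mathbf{R}^n$ carries $\pi_\rho\otimes\pi_{\mathrm{Ad}}$ and the tensor inner product; its irreducible constituents have multiplicity one and are mutually orthogonal; $\Pi^\rho_{\lambda_k}$ is the orthogonal projection onto $V_{\lambda_k}$, the Clifford homomorphism is $p^\rho_{\lambda_k}(u)\phi:=\Pi^\rho_{\lambda_k}(\phi\otimes u)$, and $^\ast$ denotes the adjoint. The conformal weight $m(\lambda_k)$ is the scalar by which $\widehat C=\frac1{32}\sum_{i,j}\pi_\rho([e_i,e_j])\otimes\pi_{\mathrm{Ad}}([e_i,e_j])$ acts on $V_{\lambda_k}$, equivalently $m(\lambda_k)=\frac12(n-\|\delta+\lambda_k\|^2+\|\delta+\rho\|^2-1)$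 with $\delta$ half the sum of positive roots. *)

From HB Require Import structures.
From mathcomp Require Import all_boot all_order all_algebra.
From mathcomp Require Import complex mxtens.
Set Implicit Arguments. Unset Strict Implicit. Unset Printing Implicit Defensive.
Import Order.TTheory GRing.Theory Num.Theory.
Local Open Scope ring_scope.

(** * The real Clifford algebra Cl_n of R^n with x y + y x = -2 <x,y>,
      realised on the basis e_A (A a subset of {0..n-1}, e_A = e_a1 ... e_ak
      with a1 < ... < ak). *)
Section Clifford.
Variables (R : rcfType) (n : nat).

Definition Cl := {ffun {set 'I_n} -> R}.

Definition symdiff (A B : {set 'I_n}) : {set 'I_n} := (A :\: B) :|: (B :\: A).

(* e_A e_B = clsign A B * e_(A symdiff B): reorder (inversions) and use e_i^2 = -1 *)
Definition clsign (A B : {set 'I_n}) : R :=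
  (-1) ^+ (#|[set p : 'I_n * 'I_n | [&& p.1 \in A, p.2 \in B & (p.2 < p.1)%N]]|
           + #|A :&: B|).

Definition clmul (x y : Cl) : Cl :=
  [ffun S => \sum_(A : {set 'I_n}) \sum_(B : {set 'I_n} | symdiff A B == S)
                clsign A B * x A * y B].

Definition clcomm (x y : Cl) : Cl := clmul x y - clmul y x.

Definition clscale (a : R) (x : Cl) : Cl := [ffun A => a * x A].

Definition clvec (u : 'cV[R]_n) : Cl :=
  [ffun A => \sum_(i < n) (A == [set i])%:R * u i 0].

Definition cle (i : 'I_n) : Cl := clvec (delta_mx i 0).

Definition spin_gen (i j : 'I_n) : Cl := clcomm (cle i) (cle j).

Definition in_spin (x : Cl) : Prop :=
  exists c : 'I_n -> 'I_n -> R,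
    x = \sum_(i < n) \sum_(j < n) clscale (c i j) (spin_gen i j).

(* infinitesimal adjoint representation on R^n: x |-> X x - x X,
   as an n x n matrix acting on column vectors *)
Definition piAd (X : Cl) : 'M[R]_n := \matrix_(i, j) (clcomm X (cle j)) [set i].

End Clifford.

(** * Representations on V = C^d (standard Hermitian inner product),
      V (x) R^n = C^(d*n) via the Kronecker product [*t] (tensor inner product). *)
Section Rep.
Local Open Scope complex_scope.
Variables (R : rcfType) (n d : nat).
Local Notation C := R[i].

Definition cmx p q (A : 'M[R]_(p, q)) : 'M[C]_(p, q) := map_mx (fun x => x%:C) A.

Definition adjmx p q (A : 'M[C]_(p, q)) : 'M[C]_(q, p) := map_mx conjc A^T.

Definition spin_rep (pi : Cl R n -> 'M[C]_d) : Prop :=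
  (forall (a : R) x y, in_spin x -> in_spin y ->
      pi (clscale a x + y) = a%:C *: pi x + pi y) /\
  (forall x y, in_spin x -> in_spin y ->
      pi (clcomm x y) = pi x *m pi y - pi y *m pi x).

(* unitary: pi(X) is skew-adjoint *)
Definition unitary_rep (pi : Cl R n -> 'M[C]_d) : Prop :=
  forall x, in_spin x -> adjmx (pi x) = - pi x.

(* irreducible: V <> 0 and no proper nonzero invariant subspace
   (subspaces given as row spaces of matrices whose rows are the vectors) *)
Definition irreducible_rep (pi : Cl R n -> 'M[C]_d) : Prop :=
  (0 < d)%N /\
  forall U : 'M[C]_d, (forall x, in_spin x -> (U *m (pi x)^T <= U)%MS) ->
    (U == (0 : 'M[C]_d))%MS \/ (U == 1%:M)%MS.

(* pi_rho (x) pi_Ad, infinitesimally *)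
Definition tens_rep (pi : Cl R n -> 'M[C]_d) (X : Cl R n) : 'M[C]_(d * n) :=
  pi X *t (1%:M : 'M[C]_n) + (1%:M : 'M[C]_d) *t cmx (piAd X).

Definition Chat (pi : Cl R n -> 'M[C]_d) : 'M[C]_(d * n) :=
  (32%:R)^-1 *: \sum_(i < n) \sum_(j < n)
     pi (spin_gen R i j) *t cmx (piAd (spin_gen R i j)).

(* phi |-> phi (x) u, as a (d*n) x d matrix *)
Definition tens_vec (u : 'cV[R]_n) : 'M[C]_(d * n, d) :=
  castmx (erefl (d * n)%N, muln1 d) ((1%:M : 'M[C]_d) *t cmx u).

(* Clifford homomorphism p(u) phi = Pi (phi (x) u) *)
Definition clifford_hom (Pi : 'M[C]_(d * n)) (u : 'cV[R]_n) : 'M[C]_(d * n, d) :=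
  Pi *m tens_vec u.

End Rep.

From HB Require Import structures.
From mathcomp Require Import all_boot all_order all_algebra.
From mathcomp Require Import complex mxtens.
From mathcomp Require Import ring.
Set Implicit Arguments. Unset Strict Implicit. Unset Printing Implicit Defensive.
Import GRing.Theory Num.Theory.
Local Open Scope ring_scope.

(* Since the P k are orthogonal projections summing to 1 on whose ranges Chat
   acts by m k, the left-hand side is T_u^* Chat T_v, where T_u phi = phi (x) u.
   For a pure tensor, T_u^* (A (x) B) T_v = <u, B v> A, and a computation with
   Clifford signs gives pi_Ad([e_i, e_j]) = 4 (E_ji - E_ij); hence
   T_u^* Chat T_v = 1/8 sum_(i,j) (u_j v_i - u_i v_j) pi([e_i, e_j]).
   As [e_j, e_i] = - [e_i, e_j] and [u, v] = sum_(i,j) u_i v_j [e_i, e_j],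
   this equals -1/4 pi([u, v]). *)

Lemma card_pairs_sum (T : finType) (A B : {set T}) (r : rel T) :
  #|[set p : T * T | [&& p.1 \in A, p.2 \in B & r p.1 p.2]]|
  = (\sum_(a in A) \sum_(b in B) r a b)%N.
Proof.
rewrite pair_big_dep /= -sum1_card [RHS]big_mkcond [LHS]big_mkcond /=.
by apply: eq_bigr => p _; rewrite inE; case: (_ \in A); case: (_ \in B); case: r.
Qed.

Lemma card_setI_sum (T : finType) (A B : {set T}) :
  #|A :&: B| = (\sum_(a in A) \sum_(b in B) (a == b))%N.
Proof.
rewrite -sum1_card big_mkcond [RHS]big_mkcond /=; apply: eq_bigr => a _.
rewrite inE big_mkcond (bigD1 a) //= eqxx big1 => [|b /negbTE]; last first.
  by rewrite eq_sym => ->; rewrite if_same.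
by rewrite addn0; case: (a \in A); case: (a \in B).
Qed.

Section CliffordSign.
Variables (R : rcfType) (n : nat).
Implicit Types (A B : {set 'I_n}) (a b : 'I_n).

Lemma clsignE A B : clsign R A B = (-1) ^+ (\sum_(a in A) \sum_(b in B) (b <= a))%N.
Proof.
rewrite /clsign (card_pairs_sum A B (fun a b => b < a)%N) card_setI_sum.
rewrite -big_split; congr (_ ^+ _).
apply: eq_bigr => a _; rewrite -big_split; apply: eq_bigr => b _ /=.
by rewrite -val_eqE /=; case: (ltngtP a b).
Qed.

Lemma clsign_set1 a b : clsign R [set a] [set b] = (-1) ^+ (b <= a).
Proof. by rewrite clsignE !big_set1. Qed.

Lemma clsignU1l a A B :
  a \notin A -> clsign R (a |: A) B = clsign R [set a] B * clsign R A B.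
Proof. by move=> aA; rewrite !clsignE big_setU1 // big_set1 exprD. Qed.

Lemma clsignU1r b A B :
  b \notin B -> clsign R A (b |: B) = clsign R A [set b] * clsign R A B.
Proof.
move=> bB; rewrite !clsignE -exprD -big_split; congr (_ ^+ _).
by apply: eq_bigr => a _; rewrite big_setU1 // big_set1.
Qed.

Lemma clsign_set1_id a : clsign R [set a] [set a] = -1.
Proof. by rewrite clsign_set1 leqnn expr1. Qed.

Lemma clsign_set1C a b :
  a != b -> clsign R [set b] [set a] = - clsign R [set a] [set b].
Proof.
rewrite !clsign_set1 -val_eqE /=.
by case: ltngtP => //= _ _; rewrite expr0 expr1 opprK.
Qed.

End CliffordSign.

Section Blades.
Variables (R : rcfType) (n : nat).
Implicit Types (A B : {set 'I_n}) (a b c : R) (x y : Cl R n).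

Definition blade a A : Cl R n := [ffun S => a * (A == S)%:R].

Lemma clmulE x y S :
  clmul x y S = \sum_A \sum_B clsign R A B * x A * y B * (symdiff A B == S)%:R.
Proof.
rewrite ffunE; apply: eq_bigr => A _; rewrite big_mkcond /=.
by apply: eq_bigr => B _; case: eqP; rewrite ?mulr1 ?mulr0.
Qed.

Lemma clmul_blade a b A B :
  clmul (blade a A) (blade b B) = blade (a * b * clsign R A B) (symdiff A B).
Proof.
apply/ffunP => S; rewrite clmulE ffunE (bigD1 A) //=.
rewrite [X in _ + X]big1 => [|A' nA]; last first.
  by apply: big1 => B' _; rewrite ffunE eq_sym (negbTE nA) !(mulr0, mul0r).
rewrite addr0 (bigD1 B) //= [X in _ + X]big1 => [|B' nB]; last first.
  by rewrite [blade b B B']ffunE eq_sym (negbTE nB) !(mulr0, mul0r).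
by rewrite addr0 !ffunE !eqxx !mulr1; ring.
Qed.

Lemma symdiffC A B : symdiff A B = symdiff B A.
Proof. by rewrite /symdiff setUC. Qed.

Lemma blade0 A : blade 0 A = 0.
Proof. by apply/ffunP => S; rewrite !ffunE mul0r. Qed.

Lemma blade_sub a b A : blade a A - blade b A = blade (a - b) A.
Proof. by apply/ffunP => S; rewrite !ffunE mulrBl. Qed.

Lemma clscale_blade c a A : clscale c (blade a A) = blade (c * a) A.
Proof. by apply/ffunP => S; rewrite !ffunE mulrA. Qed.

Lemma clscale1 x : clscale 1 x = x.
Proof. by apply/ffunP => S; rewrite ffunE mul1r. Qed.

Lemma clscale0 x : clscale 0 x = 0.
Proof. by apply/ffunP => S; rewrite !ffunE mul0r. Qed.

Lemma clcomm_blade a b A B :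
  clcomm (blade a A) (blade b B)
  = blade (a * b * (clsign R A B - clsign R B A)) (symdiff A B).
Proof.
rewrite /clcomm !clmul_blade [symdiff B A]symdiffC blade_sub.
by congr blade; ring.
Qed.

Lemma clmulDl x1 x2 y : clmul (x1 + x2) y = clmul x1 y + clmul x2 y.
Proof.
apply/ffunP => S; rewrite [RHS]ffunE !clmulE -big_split; apply: eq_bigr => A _.
by rewrite -big_split; apply: eq_bigr => B _; rewrite ffunE /=; ring.
Qed.

Lemma clmulDr x y1 y2 : clmul x (y1 + y2) = clmul x y1 + clmul x y2.
Proof.
apply/ffunP => S; rewrite [RHS]ffunE !clmulE -big_split; apply: eq_bigr => A _.
by rewrite -big_split; apply: eq_bigr => B _; rewrite ffunE /=; ring.
Qed.

Lemma clmul0l y : clmul 0 y = 0.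
Proof.
apply/ffunP => S; rewrite clmulE [RHS]ffunE.
by apply: big1 => A _; apply: big1 => B _; rewrite ffunE !(mulr0, mul0r).
Qed.

Lemma clmul0r x : clmul x 0 = 0.
Proof.
apply/ffunP => S; rewrite clmulE [RHS]ffunE.
by apply: big1 => A _; apply: big1 => B _; rewrite ffunE !(mulr0, mul0r).
Qed.

Lemma clmul_suml (I : Type) (r : seq I) (F : I -> Cl R n) y :
  clmul (\sum_(i <- r) F i) y = \sum_(i <- r) clmul (F i) y.
Proof. exact: (big_morph _ (fun x1 x2 => clmulDl x1 x2 y) (clmul0l y)). Qed.

Lemma clmul_sumr (I : Type) (r : seq I) (F : I -> Cl R n) x :
  clmul x (\sum_(i <- r) F i) = \sum_(i <- r) clmul x (F i).
Proof. exact: (big_morph _ (clmulDr x) (clmul0r x)). Qed.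

Lemma clvec_blade (u : 'cV[R]_n) : clvec u = \sum_(i < n) blade (u i 0) [set i].
Proof.
apply/ffunP => S; rewrite ffunE sum_ffunE; apply: eq_bigr => i _.
by rewrite ffunE mulrC eq_sym.
Qed.

Lemma cle_blade i : cle R i = blade 1 [set i].
Proof.
rewrite /cle clvec_blade (bigD1 i) //= big1 => [|k nk]; last first.
  by rewrite mxE (negbTE nk) blade0.
by rewrite addr0 mxE !eqxx.
Qed.

Lemma clcomm_clvec (u v : 'cV[R]_n) :
  clcomm (clvec u) (clvec v)
  = \sum_(i < n) \sum_(j < n) clscale (u i 0 * v j 0) (spin_gen R i j).
Proof.
rewrite /clcomm !clvec_blade !clmul_suml.
under eq_bigr => i _ do rewrite clmul_sumr.
under [X in _ - X]eq_bigr => i _ do rewrite clmul_sumr.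
rewrite [X in _ - X]exchange_big /= -sumrB; apply: eq_bigr => i _.
rewrite -sumrB; apply: eq_bigr => j _.
rewrite -[LHS]/(clcomm _ _) /spin_gen !cle_blade !clcomm_blade clscale_blade.
by congr blade; ring.
Qed.

End Blades.

Section AdjointSpin.
Variables (R : rcfType) (n : nat).
Implicit Types (A D : {set 'I_n}) (i j k l : 'I_n) (c : R).

Lemma symdiff_set1 i j : i != j -> symdiff [set i] [set j] = [set i; j].
Proof.
move=> ij; apply/setP => x; rewrite /symdiff !inE.
by have [->|] := eqVneq x i; rewrite ?ij ?andbF.
Qed.

Lemma symdiff_setU1 i A : i \notin A -> symdiff (i |: A) [set i] = A.
Proof.
move=> iA; apply/setP => x; rewrite /symdiff !inE.
by have [->|] := eqVneq x i; rewrite /= ?andbF ?orbF ?(negbTE iA).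
Qed.

Lemma spin_gen_blade i j :
  spin_gen R i j = blade (clsign R [set i] [set j] - clsign R [set j] [set i])
                         (symdiff [set i] [set j]).
Proof. by rewrite /spin_gen !cle_blade clcomm_blade !mul1r. Qed.

Lemma spin_gen_pair i j :
  i != j -> spin_gen R i j = blade (2%:R * clsign R [set i] [set j]) [set i; j].
Proof.
move=> ij; rewrite spin_gen_blade (clsign_set1C R ij) symdiff_set1 //.
by rewrite opprK mulr2n mulrDl !mul1r.
Qed.

Lemma piAd_blade c D :
  piAd (blade c D) = \matrix_(k, l)
    (c * (clsign R D [set l] - clsign R [set l] D) * (symdiff D [set l] == [set k])%:R).
Proof. by apply/matrixP => k l; rewrite !mxE cle_blade clcomm_blade ffunE mulr1. Qed.

Lemma piAd_spin_gen i j : piAd (spin_gen R i j) = 4%:R *: (delta_mx j i - delta_mx i j).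
Proof.
have [<-|ij] := eqVneq i j.
  apply/matrixP => k l.
  by rewrite spin_gen_blade subrr piAd_blade !mxE subrr !mul0r mulr0.
rewrite spin_gen_pair // piAd_blade; apply/matrixP => k l; rewrite !mxE.
have ij' : i \notin [set j] by rewrite inE.
have ji : j \notin [set i] by rewrite inE eq_sym.
rewrite clsignU1l // clsignU1r //.
have s_sign : clsign R [set i] [set j] = 1 \/ clsign R [set i] [set j] = -1.
  by rewrite clsign_set1; case: (j <= i)%N; [right; rewrite expr1 | left; rewrite expr0].
have [->|li] := eqVneq l i.
  rewrite clsign_set1_id (clsign_set1C R ij) symdiff_setU1 //.
  rewrite (inj_eq set1_inj) eq_sym (negbTE ij) andbT andbF subr0.
  by case: s_sign => ->; ring.
have [->|lj] := eqVneq l j.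
  rewrite clsign_set1_id (clsign_set1C R ij) setUC symdiff_setU1 //.
  rewrite (inj_eq set1_inj) eq_sym andbT andbF sub0r.
  by case: s_sign => ->; ring.
(* For l outside {i, j}, e_i e_j commutes with e_l. *)
rewrite (clsign_set1C R li) (clsign_set1C R lj) mulrNN subrr.
by rewrite !andbF subrr !mulr0 mul0r.
Qed.

Lemma form_delta_mx (u v : 'cV[R]_n) i j :
  (u^T *m delta_mx i j *m v) 0 0 = u i 0 * v j 0.
Proof.
rewrite -(mul_delta_mx (0 : 'I_1)) mulmxA -colE -mulmxA -rowE.
by rewrite !mxE big_ord1 !mxE.
Qed.

Lemma form_piAd_spin_gen (u v : 'cV[R]_n) i j :
  (u^T *m piAd (spin_gen R i j) *m v) 0 0 = 4%:R * (u j 0 * v i 0 - u i 0 * v j 0).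
Proof.
have entry00 c (M N : 'M[R]_1) : (c *: (M - N)) 0 0 = c * (M 0 0 - N 0 0).
  by rewrite !mxE.
rewrite piAd_spin_gen -scalemxAr -scalemxAl mulmxBr mulmxBl entry00.
by rewrite !form_delta_mx.
Qed.

End AdjointSpin.

Section SpinSubspace.
Variables (R : rcfType) (n : nat).

Lemma in_spin0 : in_spin (0 : Cl R n).
Proof.
exists (fun _ _ => 0); apply/ffunP => S; rewrite sum_ffunE ffunE.
by rewrite big1 // => i _; rewrite sum_ffunE big1 // => j _; rewrite ffunE mul0r.
Qed.

Lemma in_spin_lin (a : R) (x y : Cl R n) :
  in_spin x -> in_spin y -> in_spin (clscale a x + y).
Proof.
move=> [c ->] [c' ->]; exists (fun i j => a * c i j + c' i j).
apply/ffunP => S; rewrite !ffunE !sum_ffunE mulr_sumr -big_split; apply: eq_bigr => i _.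
rewrite !sum_ffunE mulr_sumr -big_split; apply: eq_bigr => j _.
by rewrite !ffunE /=; ring.
Qed.

Lemma in_spinZ (a : R) (x : Cl R n) : in_spin x -> in_spin (clscale a x).
Proof. by move=> sx; rewrite -[clscale a x]addr0; apply: in_spin_lin sx in_spin0. Qed.

Lemma in_spinD (x y : Cl R n) : in_spin x -> in_spin y -> in_spin (x + y).
Proof. by rewrite -{2}[x]clscale1; apply: in_spin_lin. Qed.

Lemma in_spin_gen (i j : 'I_n) : in_spin (spin_gen R i j).
Proof.
exists (fun a b => (a == i)%:R * (b == j)%:R).
rewrite (bigD1 i) //= [X in _ + X]big1 => [|a ai]; last first.
  by apply: big1 => b _; rewrite (negbTE ai) mul0r clscale0.
rewrite addr0 (bigD1 j) //= [X in _ + X]big1 => [|b bj]; last first.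
  by rewrite (negbTE bj) mulr0 clscale0.
by rewrite !eqxx mulr1 clscale1 addr0.
Qed.

End SpinSubspace.
Arguments in_spin0 {R n}.
Arguments in_spin_gen {R n}.

Section SpinRepresentation.
Variables (R : rcfType) (n d : nat) (pi : Cl R n -> 'M[R[i]]_d).
Hypothesis pi_rep : spin_rep pi.
Local Open Scope complex_scope.

Lemma pi0 : pi 0 = 0.
Proof.
have := (proj1 pi_rep) 1 0 0 in_spin0 in_spin0.
by rewrite clscale1 addr0 scale1r => h; apply: (addrI (pi 0)); rewrite addr0 -h.
Qed.

Lemma piZ (a : R) (x : Cl R n) : in_spin x -> pi (clscale a x) = a%:C *: pi x.
Proof.
by move=> sx; have := (proj1 pi_rep) a x 0 sx in_spin0; rewrite !addr0 pi0 addr0.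
Qed.

Lemma pi_sum (I : Type) (r : seq I) (F : I -> Cl R n) :
  (forall i, in_spin (F i)) -> pi (\sum_(i <- r) F i) = \sum_(i <- r) pi (F i).
Proof.
move=> sF; elim: r => [|a r IHr]; first by rewrite !big_nil pi0.
have sr : in_spin (\sum_(i <- r) F i).
  by apply: big_ind => //; [exact: in_spin0 | exact: in_spinD].
by rewrite !big_cons -[F a]clscale1 (proj1 pi_rep) // clscale1 scale1r IHr.
Qed.

Lemma pi_spin_comb (c : 'I_n -> 'I_n -> R) :
  pi (\sum_(i < n) \sum_(j < n) clscale (c i j) (spin_gen R i j))
  = \sum_(i < n) \sum_(j < n) (c i j)%:C *: pi (spin_gen R i j).
Proof.
have sc i j : in_spin (clscale (c i j) (spin_gen R i j)) by apply/in_spinZ/in_spin_gen.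
rewrite pi_sum => [|i]; last by apply: big_ind => //; [exact: in_spin0 | exact: in_spinD].
apply: eq_bigr => i _; rewrite (pi_sum _ (sc i)).
by apply: eq_bigr => j _; rewrite piZ //; exact: in_spin_gen.
Qed.

Lemma pi_spin_gen_swap (i j : 'I_n) : pi (spin_gen R j i) = - pi (spin_gen R i j).
Proof.
have -> : spin_gen R j i = clscale (-1) (spin_gen R i j).
  by apply/ffunP => S; rewrite /spin_gen /clcomm !ffunE /=; ring.
by rewrite (piZ _ (in_spin_gen i j)) (rmorphN1 (real_complex R)) scaleN1r.
Qed.

Lemma pi_clcomm_clvec_antisym (u v : 'cV[R]_n) :
  \sum_(i < n) \sum_(j < n) (u j 0 * v i 0 - u i 0 * v j 0)%:C *: pi (spin_gen R i j)
  = - 2%:R *: pi (clcomm (clvec u) (clvec v)).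
Proof.
rewrite clcomm_clvec pi_spin_comb.
under eq_bigr => i _ do under eq_bigr => j _ do rewrite (rmorphB (real_complex R)) scalerBl.
under eq_bigr => i _ do rewrite sumrB.
rewrite sumrB; set S := (X in _ = _ *: X).
have -> : \sum_(i < n) \sum_(j < n) (u j 0 * v i 0)%:C *: pi (spin_gen R i j) = - S.
  rewrite exchange_big -sumrN; apply: eq_bigr => i _; rewrite -sumrN.
  by apply: eq_bigr => j _; rewrite pi_spin_gen_swap scalerN.
by rewrite -opprD scaleNr scaler_nat mulr2n.
Qed.

End SpinRepresentation.

Section HermitianTensor.
Variable R : rcfType.
Local Open Scope complex_scope.

Lemma adjmx_mul m p q (A : 'M[R[i]]_(m, p)) (B : 'M[R[i]]_(p, q)) :
  adjmx (A *m B) = adjmx B *m adjmx A.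
Proof. by rewrite /adjmx trmx_mul map_mxM. Qed.

Lemma adjmx_cast m p m' p' (em : m = m') (ep : p = p') (A : 'M[R[i]]_(m, p)) :
  adjmx (castmx (em, ep) A) = castmx (ep, em) (adjmx A).
Proof. by case: m' / em; case: p' / ep; rewrite !castmx_id. Qed.

Lemma adjmx_tens m p q r (A : 'M[R[i]]_(m, p)) (B : 'M[R[i]]_(q, r)) :
  adjmx (A *t B) = adjmx A *t adjmx B.
Proof. by rewrite /adjmx trmx_tens map_mxT. Qed.

Lemma adjmx1 m : adjmx (1%:M : 'M[R[i]]_m) = 1%:M.
Proof. by rewrite /adjmx trmx1 map_mx1. Qed.

Lemma adjmx_cmx m p (A : 'M[R]_(m, p)) : adjmx (cmx A) = cmx A^T.
Proof. by apply/matrixP => a b; rewrite !mxE conjc_real. Qed.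

Lemma cmxM m p q (A : 'M[R]_(m, p)) (B : 'M[R]_(p, q)) : cmx (A *m B) = cmx A *m cmx B.
Proof. exact: (map_mxM (real_complex R)). Qed.

Lemma tens_vec_adj_mul d n (A : 'M[R[i]]_d) (B : 'M[R]_n) (u v : 'cV[R]_n) :
  adjmx (tens_vec d u) *m (A *t cmx B) *m tens_vec d v = ((u^T *m B *m v) 0 0)%:C *: A.
Proof.
rewrite /tens_vec adjmx_cast adjmx_tens adjmx1 adjmx_cmx.
rewrite -[A *t cmx B](castmx_id (erefl (d * n)%N, erefl (d * n)%N)).
rewrite -!castmx_mul !tensmx_mul mul1mx mulmx1 -!cmxM [u^T *m B *m v]mx11_scalar.
have -> : cmx ((u^T *m B *m v) 0 0)%:M = (((u^T *m B *m v) 0 0)%:C)%:M :> 'M[R[i]]_1.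
  by apply/matrixP => a b; rewrite !mxE; case: (_ == _); rewrite ?mulr1n ?mulr0n.
by rewrite tens_mx_scalar castmxKV [in RHS]mxE eqxx mulr1n.
Qed.

Lemma adj_mulmx_resolution N p q r (P : 'I_N -> 'M[R[i]]_p) (mu : 'I_N -> R[i])
    (M : 'M[R[i]]_p) (A : 'M[R[i]]_(p, q)) (B : 'M[R[i]]_(p, r)) :
  (forall k, P k *m P k = P k) -> (forall k, adjmx (P k) = P k) ->
  \sum_(k < N) P k = 1%:M -> (forall k, M *m P k = mu k *: P k) ->
  \sum_(k < N) mu k *: (adjmx (P k *m A) *m (P k *m B)) = adjmx A *m M *m B.
Proof.
move=> Pidem Padj Psum MP.
rewrite -[M]mulmx1 -Psum !mulmx_sumr mulmx_suml; apply: eq_bigr => k _.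
rewrite MP adjmx_mul Padj -scalemxAr -scalemxAl !mulmxA.
by rewrite -[_ *m P k *m P k]mulmxA Pidem.
Qed.

Lemma tens_vec_adj_Chat d n (pi : Cl R n -> 'M[R[i]]_d) (u v : 'cV[R]_n) :
  adjmx (tens_vec d u) *m Chat pi *m tens_vec d v
  = 8%:R^-1 *: \sum_(i < n) \sum_(j < n)
                 (u j 0 * v i 0 - u i 0 * v j 0)%:C *: pi (spin_gen R i j).
Proof.
rewrite /Chat -scalemxAr -scalemxAl mulmx_sumr mulmx_suml.
under eq_bigr => i _ do rewrite mulmx_sumr mulmx_suml.
under eq_bigr => i _ do under eq_bigr => j _ do
  rewrite tens_vec_adj_mul form_piAd_spin_gen rmorphM rmorph_nat -scalerA.
under eq_bigr => i _ do rewrite -scaler_sumr.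
rewrite -scaler_sumr scalerA; congr (_ *: _).
by field; rewrite ?pnatr_eq0.
Qed.

End HermitianTensor.

Local Open Scope complex_scope.

Theorem proposition3p5
  (R : rcfType) (n d : nat) (pi : Cl R n -> 'M[R[i]]_d)
  (Hrep : spin_rep pi) (Hunit : unitary_rep pi) (Hirr : irreducible_rep pi)
  (N : nat) (P : 'I_N.+1 -> 'M[R[i]]_(d * n)) (m : 'I_N.+1 -> R[i])
  (* P k is the orthogonal projection onto V_(lambda_k) *)
  (HPidem : forall k, P k *m P k = P k)
  (HPsa : forall k, adjmx (P k) = P k)
  (HPorth : forall k l, k != l -> P k *m P l = 0)
  (HPsum : \sum_(k < N.+1) P k = 1%:M)
  (* V_(lambda_k) is a submodule of V_rho (x) R^n *)
  (HPinv : forall k X, in_spin X ->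
             tens_rep pi X *m P k = P k *m tens_rep pi X *m P k)
  (* V_(lambda_k) is irreducible *)
  (HPnz : forall k, P k != 0)
  (HPirr : forall k (U : 'M[R[i]]_(d * n)), (U <= (P k)^T)%MS ->
             (forall X, in_spin X -> (U *m (tens_rep pi X)^T <= U)%MS) ->
             (U == (0 : 'M[R[i]]_(d * n)))%MS \/ (U == (P k)^T)%MS)
  (* multiplicity one: distinct constituents are non-isomorphic *)
  (HPmult1 : forall k l, k != l -> forall F : 'M[R[i]]_(d * n),
             F = P l *m F *m P k ->
             (forall X, in_spin X -> tens_rep pi X *m F = F *m tens_rep pi X) ->
             F = 0)
  (* m k = m(lambda_k): the scalar by which C^ acts on V_(lambda_k) *)
  (Hm : forall k, Chat pi *m P k = m k *: P k) :
  forall u v : 'cV[R]_n,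
    \sum_(k < N.+1) m k *: (adjmx (clifford_hom (P k) u) *m clifford_hom (P k) v)
    = - (4%:R)^-1 *: pi (clcomm (clvec u) (clvec v)).
Proof.
move=> u v.
rewrite (adj_mulmx_resolution _ _ HPidem HPsa HPsum Hm) tens_vec_adj_Chat.
rewrite (pi_clcomm_clvec_antisym Hrep) scalerA; congr (_ *: _).
by field; rewrite ?pnatr_eq0.
Qed.
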